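(* In the setting of the mirror triangle method with inexact $(\delta,L)$-oracle (see context), for every step $k\ge0$ performed by the method and every $x\in Q$, $$A_{k+1}F(x_{k+1})-A_kF(x_k)+V(x,u_{k+1})-V(x,u_k)\le\alpha_{k+1}F(x)+2\delta A_{k+1}.$$
   Context: $\mathbb{R}^n$ carries a norm $\|\cdot\|$ with dual norm $\|\lambda\|_*=\max_{\|\nu\|\le1}\langle\lambda,\nu\rangle$; $Q$ closed convex; $f:Q\to\mathbb{R}$ convex continuous, differentiable with $L$-Lipschitz gradient ($\|\nabla f(x)-\nabla f(y)\|_*\le L\|x-y\|$); $h$ convex on $Q$; $F=f+h$. Prox-function $d$: continuously differentiable, $1$-strongly convex w.r.t. $\|\cdot\|$; $V(x,y)=d(x)-d(y)-\langle\nabla d(y),x-y\rangle$. A $(\delta,L)$-oracle returns for query $y\in Q$ a pair $(f_\delta(y),\nabla f_\delta(y))$ with $0\le f(x)-f_\delta(y)-\langle\nabla f_\delta(y),x-y\rangle\le\frac L2\|x-y\|^2+\delta$ for all $x\in Q$. Method (with $x_0\in Q$, $0<L_0\le L$): $y_0=u_0=x_0$, $L_1=L_0/2$, $\alpha_0=A_0=0$. Step $k+1$ with current $L_{k+1}$: (i) $\alpha_{k+1}$ is the largest root of $A_k+\alpha=L_{k+1}\alpha^2$, $A_{k+1}=A_k+\alpha_{k+1}$; (ii) $y_{k+1}=(\alpha_{k+1}u_k+A_kx_k)/A_{k+1}$; (iii) $u_{k+1}=\arg\min_{x\in Q}\{V(x,u_k)+\alpha_{k+1}(f_\delta(y_{k+1})+\langle\nabla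 f_\delta(y_{k+1}),x-y_{k+1}\rangle+h(x))\}$; (iv) $x_{k+1}=(\alpha_{k+1}u_{k+1}+A_kx_k)/A_{k+1}$; (v) if $f_\delta(x_{k+1})\le f_\delta(y_{k+1})+\langle\nabla f_\delta(y_{k+1}),x_{k+1}-y_{k+1}\rangle+\frac{L_{k+1}}2\|x_{k+1}-y_{k+1}\|^2+\delta$, set $L_{k+2}=L_{k+1}/2$ and go to the next step; otherwise replace $L_{k+1}$ by $2L_{k+1}$ and repeat step $k+1$. *)

From HB Require Import structures.
From mathcomp Require Import all_boot all_order all_algebra.
From mathcomp Require Import all_classical all_reals all_analysis.
Set Implicit Arguments. Unset Strict Implicit. Unset Printing Implicit Defensive.
Import Order.TTheory GRing.Theory Num.Theory.
Import numFieldNormedType.Exports.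
Local Open Scope classical_set_scope.
Local Open Scope ring_scope.

Section Defs.
Variables (R : realType) (n : nat).
Local Notation vec := 'rV[R]_n.

Definition dotp (l v : vec) : R := \sum_(i < n) l ord0 i * v ord0 i.

Definition is_norm (nrm : vec -> R) : Prop :=
  [/\ forall v, 0 <= nrm v,
      forall v, nrm v = 0 -> v = 0,
      forall (a : R) v, nrm (a *: v) = `|a| * nrm v &
      forall v w, nrm (v + w) <= nrm v + nrm w].

Definition dual_norm (nrm : vec -> R) (l : vec) : R :=
  sup [set dotp l v | v in [set v | nrm v <= 1]].

Definition convex_on (Q : set vec) (g : vec -> R) : Prop :=
  forall x y (t : R), Q x -> Q y -> 0 <= t <= 1 ->
    g (t *: x + (1 - t) *: y) <= t * g x + (1 - t) * g y.

Definition has_gradient (g : vec -> R) (gr : vec) (x : vec) : Prop :=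
  differentiable g x /\ forall v, 'd g x v = dotp gr v.

Definition strongly_convex1 (nrm : vec -> R) (Q : set vec) (d : vec -> R)
    (gradd : vec -> vec) : Prop :=
  forall x y, Q x -> Q y ->
    d x >= d y + dotp (gradd y) (x - y) + 2^-1 * nrm (x - y) ^+ 2.

Definition bregman (d : vec -> R) (gradd : vec -> vec) (x y : vec) : R :=
  d x - d y - dotp (gradd y) (x - y).

Definition inexact_oracle (nrm : vec -> R) (Q : set vec) (f : vec -> R)
    (delta L : R) (fd : vec -> R) (gd : vec -> vec) : Prop :=
  forall x y, Q x -> Q y ->
    0 <= f x - fd y - dotp (gd y) (x - y) /\
    f x - fd y - dotp (gd y) (x - y) <= L / 2 * nrm (x - y) ^+ 2 + delta.

(** Accepted iterates of the mirror triangle method with backtracking.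
    Lacc k is the value of L_{k+1} with which step k+1 was accepted. *)
Definition mtm_run (nrm : vec -> R) (Q : set vec) (h : vec -> R)
    (d : vec -> R) (gradd : vec -> vec) (delta L0 : R)
    (fd : vec -> R) (gd : vec -> vec) (x0 : vec)
    (Lacc alpha A : nat -> R) (y u x : nat -> vec) : Prop :=
  y 0%N = x0 /\ u 0%N = x0 /\ x 0%N = x0 /\ alpha 0%N = 0 /\ A 0%N = 0 /\
  forall k : nat,
    ((* L_{k+1} = (previous L)/2 * 2^j : j doublings in the backtracking *)
        exists j : nat,
          Lacc k = (if k is k'.+1 then Lacc k' else L0) / 2 * 2 ^+ j) /\
        (A k + alpha k.+1 = Lacc k * alpha k.+1 ^+ 2 /\
          (forall a, A k + a = Lacc k * a ^+ 2 -> a <= alpha k.+1)) /\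
        A k.+1 = A k + alpha k.+1 /\
        y k.+1 = (A k.+1)^-1 *: (alpha k.+1 *: u k + A k *: x k) /\
        (Q (u k.+1) /\
          (forall z, Q z ->
             bregman d gradd (u k.+1) (u k) + alpha k.+1 *
               (fd (y k.+1) + dotp (gd (y k.+1)) (u k.+1 - y k.+1) + h (u k.+1))
             <= bregman d gradd z (u k) + alpha k.+1 *
               (fd (y k.+1) + dotp (gd (y k.+1)) (z - y k.+1) + h z))) /\
        x k.+1 = (A k.+1)^-1 *: (alpha k.+1 *: u k.+1 + A k *: x k) /\
        fd (x k.+1) <= fd (y k.+1) + dotp (gd (y k.+1)) (x k.+1 - y k.+1)
                       + Lacc k / 2 * nrm (x k.+1 - y k.+1) ^+ 2 + delta.

End Defs.

From HB Require Import structures.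
From mathcomp Require Import all_boot all_order all_algebra.
From mathcomp Require Import all_classical all_reals all_analysis.
From mathcomp Require Import ring lra.
Set Implicit Arguments. Unset Strict Implicit. Unset Printing Implicit Defensive.
Import Order.TTheory GRing.Theory Num.Theory.
Import numFieldNormedType.Exports.
Local Open Scope classical_set_scope.
Local Open Scope ring_scope.

(* Write A' = A_k + a for a = alpha_(k+1).  Since x_(k+1) - y_(k+1) =
   (a / A') (u_(k+1) - u_k) and A' = L_(k+1) a^2, the acceptance test and the
   oracle bound A' f(x_(k+1)) by A_k f(x_k) + a (linear model of f at y_(k+1)
   evaluated at u_(k+1)) + |u_(k+1) - u_k|^2 / 2 + 2 delta A'; convexity of h
   splits A' h(x_(k+1)) the same way.  Strong convexity of d bounds the
   quadratic term by V(u_(k+1), u_k), and the three-point inequality for the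
   prox step u_(k+1) turns V(u_(k+1), u_k) + a (model + h)(u_(k+1)) into
   V(z, u_k) - V(z, u_(k+1)) + a (model + h)(z), where the model lies below f. *)

Section Geometry.
Variables (R : realType) (n : nat).
Local Notation vec := 'rV[R]_n.
Implicit Types (l v w p q z : vec) (a b c t : R).

Lemma dotpDr l v w : dotp l (v + w) = dotp l v + dotp l w.
Proof. by rewrite /dotp -big_split; apply: eq_bigr => i _; rewrite mxE mulrDr. Qed.

Lemma dotpZr l a v : dotp l (a *: v) = a * dotp l v.
Proof. by rewrite /dotp mulr_sumr; apply: eq_bigr => i _; rewrite mxE mulrCA. Qed.

Lemma dotp0r l : dotp l 0 = 0.
Proof. by rewrite -(scale0r 0) dotpZr mul0r. Qed.

Lemma wmeanE a b p q : 0 <= b -> 0 < a ->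
  (b + a)^-1 *: (a *: p + b *: q) = (a / (b + a)) *: p + (1 - a / (b + a)) *: q.
Proof.
move=> b0 a0; have ba : b + a != 0 by rewrite gt_eqF // ltr_wpDl.
by apply/rowP => i; rewrite !mxE; field.
Qed.

Lemma wmean_weight_itv a b : 0 <= b -> 0 < a -> 0 <= a / (b + a) <= 1.
Proof.
move=> b0 a0; have ba : 0 < b + a by rewrite ltr_wpDl.
by rewrite divr_ge0 ?(ltW a0) ?(ltW ba) //= ler_pdivrMr ?mul1r ?lerDr.
Qed.

Lemma convex_set_comb (Q : set vec) t p q : convex_set Q ->
  Q p -> Q q -> 0 <= t <= 1 -> Q (t *: p + (1 - t) *: q).
Proof.
move=> cQ Qp Qq /andP[t0 t1].
by have := cQ p q (Itv01 t0 t1) (mem_set Qp) (mem_set Qq); rewrite inE.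
Qed.

Lemma convex_set_wmean (Q : set vec) a b p q : convex_set Q ->
  0 <= b -> 0 < a -> Q p -> Q q -> Q ((b + a)^-1 *: (a *: p + b *: q)).
Proof.
move=> cQ b0 a0 Qp Qq; rewrite wmeanE //.
by apply: convex_set_comb => //; exact: wmean_weight_itv.
Qed.

Lemma convex_on_wmean (Q : set vec) (g : vec -> R) a b p q : convex_on Q g ->
  0 <= b -> 0 < a -> Q p -> Q q ->
  (b + a) * g ((b + a)^-1 *: (a *: p + b *: q)) <= a * g p + b * g q.
Proof.
move=> cg b0 a0 Qp Qq; have ba : 0 < b + a by rewrite ltr_wpDl.
have -> : a * g p + b * g q
    = (b + a) * (a / (b + a) * g p + (1 - a / (b + a)) * g q).
  by field; rewrite gt_eqF.
by rewrite wmeanE // ler_wpM2l ?(ltW ba) //; exact: cg (wmean_weight_itv b0 a0).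
Qed.

Lemma convex_on_model (Q : set vec) (g : vec -> R) a c l y :
  0 <= a -> convex_on Q g ->
  convex_on Q (fun w => a * (c + dotp l (w - y) + g w)).
Proof.
move=> a0 cg w1 w2 t Q1 Q2 t01 /=.
have -> : t *: w1 + (1 - t) *: w2 - y = t *: (w1 - y) + (1 - t) *: (w2 - y).
  by apply/rowP => i; rewrite !mxE; ring.
rewrite (dotpDr l (t *: _)) !dotpZr.
have := ler_wpM2l a0 (cg w1 w2 t Q1 Q2 t01).
lra.
Qed.

End Geometry.

Section MirrorStep.
Variables (R : realType) (n : nat).
Local Notation vec := 'rV[R]_n.
Variables (d : vec -> R) (gradd : vec -> vec).
Local Notation V := (bregman d gradd).

Lemma lb_slopes_le_dotp_gradient (g : vec -> R) (gr p v : vec) (K : R) :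
  has_gradient g gr p ->
  (forall t, 0 < t -> t <= 1 -> K <= t^-1 * (g (t *: v + p) - g p)) ->
  K <= dotp gr v.
Proof.
move=> [dg dgE] Kle.
have slopes : (fun t : R => t^-1 *: ((g \o shift p) (t *: v) - g p)) @ 0^' --> 'D_v g p.
  exact: diff_derivable.
have slopes_right :
    (fun t : R => t^-1 *: ((g \o shift p) (t *: v) - g p)) @ 0^'+ --> 'D_v g p.
  move=> U /slopes; rewrite /= !near_simpl /= !near_withinE.
  by apply: filterS => t Ht t0; apply: Ht; rewrite gt_eqF.
rewrite -dgE -deriveE //.
apply: (cvgr_to_ge slopes_right); near=> t.
have t0 : 0 < t by near: t; exact: nbhs_right_gt.
have t1 : t <= 1 by near: t; exact: nbhs_right_le.
exact: Kle.
Unshelve. all: by end_near.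
Qed.

Lemma bregman_three_point (z p q : vec) :
  V z q - V p q - V z p = dotp (gradd p) (z - p) - dotp (gradd q) (z - p).
Proof.
rewrite /bregman; have -> : z - q = (z - p) + (p - q) by rewrite addrA subrK.
by rewrite dotpDr; ring.
Qed.

Variables (Q : set vec) (phi : vec -> R) (q p : vec).
Hypotheses (convQ : convex_set Q) (convphi : convex_on Q phi) (Qp : Q p)
  (dp : has_gradient d (gradd p) p)
  (p_min : forall w, Q w -> V p q + phi p <= V w q + phi w).

Lemma prox_first_order (z : vec) : Q z ->
  dotp (gradd q) (z - p) - phi z + phi p <= dotp (gradd p) (z - p).
Proof.
move=> Qz; apply: lb_slopes_le_dotp_gradient dp _ => t t0 t1.
have wE : t *: (z - p) + p = t *: z + (1 - t) *: p.
  by apply/rowP => i; rewrite !mxE; ring.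
have t01 : 0 <= t <= 1 by rewrite (ltW t0) t1.
have Qw : Q (t *: (z - p) + p) by rewrite wE; exact: convex_set_comb.
have phi_w : phi (t *: (z - p) + p) <= t * phi z + (1 - t) * phi p.
  by rewrite wE; exact: convphi.
have VwE : V (t *: (z - p) + p) q - V p q
    = d (t *: (z - p) + p) - d p - t * dotp (gradd q) (z - p).
  rewrite /bregman; have -> : t *: (z - p) + p - q = t *: (z - p) + (p - q).
    by rewrite addrA.
  by rewrite (dotpDr _ (t *: _)) dotpZr; ring.
have := p_min Qw; rewrite ler_pdivlMl //; lra.
Qed.

Lemma prox_three_point (z : vec) : Q z ->
  V p q + phi p + V z p <= V z q + phi z.
Proof. by move=> /prox_first_order; have := bregman_three_point z p q; lra. Qed.

End MirrorStep.

Lemma largest_root_gt0 (R : realType) (L B a : R) : 0 < L -> 0 <= B ->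
  (forall b, B + b = L * b ^+ 2 -> b <= a) -> 0 < a.
Proof.
move=> L0 B0 a_max.
pose s := Num.sqrt (1 + 4 * L * B).
have s0 : 0 <= s by exact: sqrtr_ge0.
have s2 : s ^+ 2 = 1 + 4 * L * B.
  by rewrite sqr_sqrtr // addr_ge0 // !mulr_ge0 // ltW.
have Ln : L != 0 by rewrite gt_eqF.
apply: (@lt_le_trans _ _ ((1 + s) / (2 * L))).
  by rewrite divr_gt0 ?mulr_gt0 // ltr_pwDl.
apply: a_max.
have -> : L * ((1 + s) / (2 * L)) ^+ 2 = (1 + 2 * s + s ^+ 2) / (4 * L) by field.
by rewrite s2; field.
Qed.

Section InexactOracle.
Variables (R : realType) (n : nat).
Local Notation vec := 'rV[R]_n.
Variables (nrm : vec -> R) (Q : set vec) (f fd : vec -> R) (gd : vec -> vec)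
  (delta L : R).
Hypotheses (nrmZ : forall (c : R) v, nrm (c *: v) = `|c| * nrm v)
  (convQ : convex_set Q) (oracle : inexact_oracle nrm Q f delta L fd gd).

Lemma oracle_model_le (y z : vec) : Q z -> Q y -> fd y + dotp (gd y) (z - y) <= f z.
Proof. by move=> Qz Qy; have [+ _] := oracle Qz Qy; lra. Qed.

Lemma oracle_value_le (z : vec) : Q z -> f z <= fd z + delta.
Proof.
move=> Qz; have [_] := oracle Qz Qz.
have nrm0 : nrm 0 = 0 by rewrite -(scale0r 0) nrmZ normr0 mul0r.
by rewrite subrr dotp0r nrm0 expr0n /= mulr0; lra.
Qed.

Lemma accepted_step_le (Lk a B : R) (q p w y' x' : vec) :
  0 <= B -> 0 < a -> B + a = Lk * a ^+ 2 -> Q q -> Q p -> Q w ->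
  y' = (B + a)^-1 *: (a *: q + B *: w) -> x' = (B + a)^-1 *: (a *: p + B *: w) ->
  fd x' <= fd y' + dotp (gd y') (x' - y') + Lk / 2 * nrm (x' - y') ^+ 2 + delta ->
  (B + a) * f x'
    <= B * f w + a * (fd y' + dotp (gd y') (p - y')) + nrm (p - q) ^+ 2 / 2
       + 2 * delta * (B + a).
Proof.
move=> B0 a0 BaE Qq Qp Qw y'E x'E accept.
have Ba : 0 < B + a by rewrite ltr_wpDl.
have Ban : B + a != 0 by rewrite gt_eqF.
have Qy' : Q y' by rewrite y'E; exact: convex_set_wmean.
have Qx' : Q x' by rewrite x'E; exact: convex_set_wmean.
set g := gd y'; set N := nrm (p - q).
have nrm_step : nrm (x' - y') = a / (B + a) * N.
  have -> : x' - y' = (a / (B + a)) *: (p - q).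
    by rewrite x'E y'E; apply/rowP => i; rewrite !mxE; field.
  by rewrite nrmZ ger0_norm // divr_ge0 // ltW.
have dotp_step : (B + a) * dotp g (x' - y')
    = a * dotp g (p - y') + B * dotp g (w - y').
  have -> : x' - y' = (B + a)^-1 *: (a *: (p - y') + B *: (w - y')).
    by rewrite x'E; apply/rowP => i; rewrite !mxE; field.
  by rewrite dotpZr (dotpDr _ (a *: _)) !dotpZr mulrA mulfV // mul1r.
(* The step-size equation [B + a = Lk a^2] is what makes this exact. *)
have quad_step : (B + a) * (Lk / 2 * nrm (x' - y') ^+ 2) = N ^+ 2 / 2.
  rewrite nrm_step; have -> : (B + a) * (Lk / 2 * (a / (B + a) * N) ^+ 2)
      = (Lk * a ^+ 2) * N ^+ 2 / (2 * (B + a)) by field.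
  by rewrite -BaE; field.
have f_x' : f x' <= fd y' + dotp g (x' - y') + Lk / 2 * nrm (x' - y') ^+ 2 + 2 * delta.
  by have := oracle_value_le Qx'; lra.
have f_w : B * (fd y' + dotp g (w - y')) <= B * f w.
  by rewrite ler_wpM2l // oracle_model_le.
have := ler_wpM2l (ltW Ba) f_x'.
rewrite !mulrDr dotp_step quad_step; lra.
Qed.

End InexactOracle.

Section MirrorTriangleMethod.
Variables (R : realType) (n : nat).
Local Notation vec := 'rV[R]_n.
Variables (nrm : vec -> R) (Q : set vec) (f h d : vec -> R) (gradd : vec -> vec)
  (L delta L0 : R) (fd : vec -> R) (gd : vec -> vec) (x0 : vec)
  (Lacc alpha A : nat -> R) (y u x : nat -> vec).
Hypotheses (nrmZ : forall (c : R) v, nrm (c *: v) = `|c| * nrm v)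
  (convQ : convex_set Q) (convh : convex_on Q h)
  (dgrad : forall z, Q z -> has_gradient d (gradd z) z)
  (dconv : strongly_convex1 nrm Q d gradd)
  (oracle : inexact_oracle nrm Q f delta L fd gd)
  (Qx0 : Q x0) (L0_gt0 : 0 < L0)
  (run : mtm_run nrm Q h d gradd delta L0 fd gd x0 Lacc alpha A y u x).

Lemma mtm_Lacc_gt0 k : 0 < Lacc k.
Proof.
have [_ [_ [_ [_ [_ step]]]]] := run.
elim: k => [|k IHk]; [have [[j ->] _] := step 0%N | have [[j ->] _] := step k.+1];
  by rewrite mulr_gt0 ?exprn_gt0 ?divr_gt0.
Qed.

Lemma mtm_alpha_gt0 k : 0 <= A k -> 0 < alpha k.+1.
Proof.
move=> Ak; have [_ [_ [_ [_ [_ /(_ k) [_ [[_ alpha_max] _]]]]]]] := run.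
exact: largest_root_gt0 (mtm_Lacc_gt0 k) Ak alpha_max.
Qed.

Lemma mtm_invariant k : [/\ 0 <= A k, Q (u k) & Q (x k)].
Proof.
have [_ [u0 [x0E [_ [A0 step]]]]] := run.
elim: k => [|k [Ak Quk Qxk]]; first by rewrite A0 u0 x0E lexx.
have [_ [_ [AE [_ [[Qu' _] [xE _]]]]]] := step k.
have ak := mtm_alpha_gt0 Ak.
split=> //; first by rewrite AE addr_ge0 // ltW.
by rewrite xE AE; exact: convex_set_wmean.
Qed.

Lemma mtm_step_ineq k z : Q z ->
  A k.+1 * (f (x k.+1) + h (x k.+1)) - A k * (f (x k) + h (x k))
    + bregman d gradd z (u k.+1) - bregman d gradd z (u k)
  <= alpha k.+1 * (f z + h z) + 2 * delta * A k.+1.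
Proof.
move=> Qz; have [Ak Quk Qxk] := mtm_invariant k.
have ak := mtm_alpha_gt0 Ak.
have [_ [_ [_ [_ [_ /(_ k) [_ [[AE _] [A'E [yE [[Qu' u_min] [xE accept]]]]]]]]]]] := run.
rewrite A'E in yE xE *.
have Qy' : Q (y k.+1) by rewrite yE; exact: convex_set_wmean.
have f_step := accepted_step_le nrmZ convQ oracle Ak ak AE Quk Qu' Qxk yE xE accept.
have h_step : (A k + alpha k.+1) * h (x k.+1)
    <= alpha k.+1 * h (u k.+1) + A k * h (x k).
  by rewrite xE; exact: convex_on_wmean convh Ak ak Qu' Qxk.
have V_step : nrm (u k.+1 - u k) ^+ 2 / 2 <= bregman d gradd (u k.+1) (u k).
  by have := dconv Qu' Quk; rewrite /bregman; lra.
have prox := prox_three_point convQ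
  (convex_on_model (fd (y k.+1)) (gd (y k.+1)) (y k.+1) (ltW ak) convh)
  Qu' (dgrad Qu') u_min Qz.
have f_z := ler_wpM2l (ltW ak) (oracle_model_le oracle Qz Qy').
rewrite /= in prox; lra.
Qed.

End MirrorTriangleMethod.

Theorem lemma4 (R : realType) (n : nat) (nrm : 'rV[R]_n -> R)
  (Q : set 'rV[R]_n) (f h d : 'rV[R]_n -> R) (gradf gradd : 'rV[R]_n -> 'rV[R]_n)
  (L delta L0 : R) (fd : 'rV[R]_n -> R) (gd : 'rV[R]_n -> 'rV[R]_n)
  (x0 : 'rV[R]_n) (Lacc alpha A : nat -> R) (y u x : nat -> 'rV[R]_n) :
  is_norm nrm ->
  closed Q -> convex_set Q ->
  convex_on Q f -> {within Q, continuous f} ->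
  (forall z, Q z -> has_gradient f (gradf z) z) ->
  (forall z w, Q z -> Q w ->
     dual_norm nrm (gradf z - gradf w) <= L * nrm (z - w)) ->
  convex_on Q h ->
  (forall z, Q z -> has_gradient d (gradd z) z) ->
  {within Q, continuous gradd} ->
  strongly_convex1 nrm Q d gradd ->
  inexact_oracle nrm Q f delta L fd gd ->
  Q x0 -> 0 < L0 -> L0 <= L ->
  mtm_run nrm Q h d gradd delta L0 fd gd x0 Lacc alpha A y u x ->
  forall (k : nat) (z : 'rV[R]_n), Q z ->
    A k.+1 * (f (x k.+1) + h (x k.+1)) - A k * (f (x k) + h (x k))
      + bregman d gradd z (u k.+1) - bregman d gradd z (u k)
    <= alpha k.+1 * (f z + h z) + 2 * delta * A k.+1.
Proof.
move=> [_ _ nrmZ _] _ convQ _ _ _ _ convh dgrad _ dconv oracle Qx0 L0_gt0 _ run.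
exact: mtm_step_ineq nrmZ convQ convh dgrad dconv oracle Qx0 L0_gt0 run.
Qed.
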